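(* Consider the $n$-order passive filter, for $i=1,\dots,m$, \[ \begin{cases} x_{i}^{(n-1)} = -\sum_{k=1}^{n-1}\gamma_{ik}x_{i}^{(n-k-1)}+\gamma_{in}(b_{i}-\hat{b}_{i}),\\ \dot{\hat{b}}_{i} = -S(\omega_{m}-\hat{\eta})\hat{b}_{i}+w_{i},\\ \dot{\hat{\eta}} = -\Gamma_{p}\sum_{i=1}^{m}S(b_{i})\hat{b}_{i}, \end{cases} \qquad w_{i}=B_{pi}^{T}P_{pi}X_{i}, \] under the assumptions that at least two of the measured vectors $b_i$ are non-collinear, and that the gyro bias $\eta$ is bounded and constant ($\dot\eta=0$) and the measured angular velocity $\omega_m(\cdot)$ (hence $\omega(\cdot)$) is bounded. Then the errors $\tilde{b}_{i}=b_{i}-\hat{b}_{i}$, $i=1,\dots,m$, and $\tilde{\eta}=\eta-\hat{\eta}$ converge globally asymptotically to zero.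
   Context: A rigid body has attitude $R\in SO(3)$ with $\dot R=RS(\omega)$, where $\omega$ is the body angular velocity and $S(x)$ is the skew-symmetric matrix with $S(x)y=x\times y$. Given constant inertial vectors $r_i$, $i=1,\dots,m$, the body-frame measurements are $b_i=R^Tr_i$, so $\dot b_i=-S(\omega)b_i$. The rate gyro measures $\omega_m=\omega+\eta$ with unknown bias $\eta$, giving $\dot b_i=-S(\omega_m-\eta)b_i$, $\dot\eta=0$. For each $i$, $\Upsilon_i=(\gamma_{i1},\dots,\gamma_{in})\in\mathbb{R}^n$ is chosen so that both $s^n+\sum_{k=1}^n\gamma_{ik}s^{n-k}$ and $s^{n-1}+\sum_{k=1}^{n-1}\gamma_{ik}s^{n-1-k}$ are Hurwitz (such choices exist, e.g. $\gamma_{ik}=\binom{n}{k}\alpha^k$, $\alpha>0$); $x_i^{(j)}$ denotes the $j$-th time derivative of $x_i\in\mathbb{R}^3$. Set $X_i=[x_i^T,\dot x_i^T,\dots,x_i^{(n-2)T}]^T\in\mathbb{R}^{3(n-1)}$, $A_{pi}=A_{\pi(\Upsilon_i)}\otimes I_3$ where $A_{\pi(\Upsilon_i)}$ is the $(n-1)\times(n-1)$ companion matrix of $(\gamma_{i1},\dots,\gamma_{i,n-1})$ (ones on the superdiagonal, last row $(-\gamma_{i,n-1},\dots,-\gamma_{i1})$), $B_{pi}=\gamma_{in}e_{n-1}\otimes I_3$ with $e_{n-1}=(0,\dots,0,1)^T\in\mathbb{R}^{n-1}$, and $P_{pi}$ the symmetric positive definite solution of $A_{pi}^TP_{pi}+P_{pi}A_{pi}=-Q_{pi}$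 for a given symmetric positive definite $Q_{pi}$. $\Gamma_p$ is a positive definite diagonal gain matrix. *)

From mathcomp Require Import all_boot all_order all_algebra.
From mathcomp Require Import all_classical all_reals all_analysis.
From mathcomp Require Import complex.
Set Implicit Arguments. Unset Strict Implicit. Unset Printing Implicit Defensive.
Import Order.TTheory GRing.Theory Num.Theory.
Import numFieldNormedType.Exports.
Local Open Scope ring_scope.

Section Defs.
Variable R : realType.

(* S(x): skewS-symmetric matrix with S(x) y = x \times y. *)
Definition skewS (x : 'cV[R]_3) : 'M[R]_3 :=
  let x0 := x (inord 0) 0 in let x1 := x (inord 1) 0 in let x2 := x (inord 2) 0 in
  \matrix_(i < 3, j < 3)
    nth 0 (nth [::] [:: [:: 0; - x2; x1];
                       [:: x2; 0; - x0];
                       [:: - x1; x0; 0]] i) j.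

(* Index decomposition 'I_(m*n) -> 'I_m * 'I_n with  (i, j) <-> i * n + j
   (the inverse of mathcomp's mxvec_index). *)
Definition kron_idx (m n : nat) (r : 'I_(m * n)) : 'I_m * 'I_n :=
  enum_val (cast_ord (esym (mxvec_cast m n)) r).

Definition kron (m1 n1 m2 n2 : nat) (A : 'M[R]_(m1, n1)) (B : 'M[R]_(m2, n2))
  : 'M[R]_(m1 * m2, n1 * n2) :=
  \matrix_(r, c) (A (kron_idx r).1 (kron_idx c).1 * B (kron_idx r).2 (kron_idx c).2).

Definition companion (p : nat) (g : nat -> R) : 'M[R]_p :=
  \matrix_(i < p, j < p)
    ((if j == i.+1 :> nat then 1 else 0)
     + (if i == p.-1 :> nat then - g (p - j)%N else 0)).

Definition elast (p : nat) : 'cV[R]_p :=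
  \col_(i < p) (if i == p.-1 :> nat then 1 else 0).

Definition charpoly_of (d : nat) (g : nat -> R) : {poly R} :=
  'X^d + \sum_(1 <= k < d.+1) (g k)%:P * 'X^(d - k).

Definition hurwitz (p : {poly R}) : Prop :=
  forall z : R[i], root (map_poly (fun x : R => x%:C%C) p) z -> complex.Re z < 0.

Definition sym_posdef (k : nat) (P : 'M[R]_k) : Prop :=
  P^T = P /\ forall v : 'cV[R]_k, v != 0 -> 0 < (v^T *m P *m v) 0 0.

Definition posdef_diag (k : nat) (G : 'M[R]_k) : Prop :=
  exists d : 'rV[R]_k, (forall i, 0 < d 0 i) /\ G = diag_mx d.

Definition in_SO3 (Q : 'M[R]_3) : Prop := Q^T *m Q = 1%:M /\ \det Q = 1.

End Defs.

Section Filter.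
Variable R : realType.
Definition Ap (n : nat) (g : nat -> R) : 'M[R]_(n.-1 * 3) :=
  kron (companion n.-1 g) (1%:M : 'M[R]_3).
Definition Bp (n : nat) (g : nat -> R) : 'M[R]_(n.-1 * 3, 3) :=
  g n *: kron (elast R n.-1) (1%:M : 'M[R]_3).
End Filter.

(* The function
     V = sum_i (X_i^T P_i X_i + |b~_i|^2) + eta~^T Gamma^-1 eta~
   is a Lyapunov function for the error system: the Lyapunov equation for
   A_pi and the identity b~^T S(eta~) b^ = - eta~^T S(b) b^ cancel all cross
   terms, so V' = - sum_i X_i^T Q_i X_i <= 0.  Hence every signal is bounded,
   and Barbalat's lemma applied three times gives X_i -> 0, then X_i' -> 0,
   hence B_pi b~_i -> 0 and b~_i -> 0 (B_pi has full column rank because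
   gamma_in <> 0 by the Hurwitz assumption), and finally, from the b~_i
   equation, S(eta~) b^_i -> 0, hence S(eta~) b_i -> 0.  With two
   non-collinear b_i, whose Gram data is constant in time, this forces
   eta~ -> 0. *)
From mathcomp Require Import all_boot all_order all_algebra.
From mathcomp Require Import all_classical all_reals all_analysis.
From mathcomp Require Import complex.
From mathcomp Require Import ring lra zify.
Set Implicit Arguments. Unset Strict Implicit. Unset Printing Implicit Defensive.
Import Order.TTheory GRing.Theory Num.Theory Num.Def.
Import numFieldNormedType.Exports.
Local Open Scope ring_scope.
Local Open Scope classical_set_scope.

Section Asymptotics.
Variable R : realType.
Implicit Types (f g h u : R -> R).

(* The dynamics are only assumed for [t > 0]; bounds are taken on [t >= 1],
   a closed half-line inside the domain where the mean value theorem applies. *)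
Definition bounded1 f := exists M, forall t, 1 <= t -> `|f t| <= M.

Definition vanishing f := forall e, 0 < e -> exists A, forall t, A <= t -> `|f t| <= e.

Definition cauchy_oo f :=
  forall e, 0 < e -> exists A, forall s t, A <= s -> A <= t -> `|f s - f t| <= e.

Lemma bounded1_cst c : bounded1 (fun _ => c).
Proof. by exists `|c|. Qed.

Lemma eq_bounded1 f g : (forall t, 1 <= t -> f t = g t) -> bounded1 f -> bounded1 g.
Proof. by move=> fg [M hM]; exists M => t t1; rewrite -fg // hM. Qed.

Lemma bounded1D f g : bounded1 f -> bounded1 g -> bounded1 (fun t => f t + g t).
Proof.
move=> [M1 h1] [M2 h2]; exists (M1 + M2) => t t1.
by rewrite (le_trans (ler_normD _ _)) // lerD ?h1 ?h2.
Qed.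

Lemma bounded1N f : bounded1 f -> bounded1 (fun t => - f t).
Proof. by move=> [M hM]; exists M => t t1; rewrite normrN hM. Qed.

Lemma bounded1M f g : bounded1 f -> bounded1 g -> bounded1 (fun t => f t * g t).
Proof.
move=> [M1 h1] [M2 h2]; exists (M1 * M2) => t t1.
by rewrite normrM ler_pM // ?h1 ?h2.
Qed.

Lemma bounded1_sum (I : Type) (s : seq I) (F : I -> R -> R) :
  (forall i, bounded1 (F i)) -> bounded1 (fun t => \sum_(i <- s) F i t).
Proof.
move=> hF; elim: s => [|a s IH].
  by apply: eq_bounded1 (bounded1_cst 0) => t _; rewrite big_nil.
by apply: eq_bounded1 (bounded1D (hF a) IH) => t _; rewrite big_cons.
Qed.

Lemma bounded1_sqr f K : (forall t, 1 <= t -> f t ^+ 2 <= K) -> bounded1 f.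
Proof.
move=> hK; exists (1 + K) => t t1; have := hK t t1.
case: (leP `|f t| 1) => [f1 fK|f1]; last by rewrite -real_normK ?num_real; nra.
by rewrite (le_trans f1) // lerDl (le_trans _ fK) // sqr_ge0.
Qed.

Lemma eq_vanishing f g : (forall t, 1 <= t -> f t = g t) -> vanishing f -> vanishing g.
Proof.
move=> fg hf e e0; have [A hA] := hf e e0; exists (maxr A 1) => t.
by rewrite ge_max => /andP[tA t1]; rewrite -fg // hA.
Qed.

Lemma vanishing0 : vanishing (fun _ => 0).
Proof. by move=> e e0; exists 0 => t _; rewrite normr0 ltW. Qed.

Lemma vanishingD f g : vanishing f -> vanishing g -> vanishing (fun t => f t + g t).
Proof.
move=> hf hg e e0; have e20 : 0 < e / 2 by rewrite divr_gt0.
have [A1 h1] := hf _ e20; have [A2 h2] := hg _ e20.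
exists (maxr A1 A2) => t; rewrite ge_max => /andP[t1 t2].
by rewrite (le_trans (ler_normD _ _)) // (splitr e) lerD ?h1 ?h2.
Qed.

Lemma vanishingN f : vanishing f -> vanishing (fun t => - f t).
Proof. by move=> hf e e0; have [A hA] := hf e e0; exists A => t tA; rewrite normrN hA. Qed.

Lemma vanishingMl f g : bounded1 f -> vanishing g -> vanishing (fun t => f t * g t).
Proof.
move=> [M hM] hg e e0; have M1 : 0 < `|M| + 1 by rewrite ltr_wpDl.
have [A hA] := hg (e / (`|M| + 1)) (divr_gt0 e0 M1).
exists (maxr A 1) => t; rewrite ge_max => /andP[tA t1].
rewrite normrM (le_trans (ler_pM _ _ (hM t t1) (hA t tA))) //.
have MM : M <= `|M| + 1 by rewrite (le_trans (ler_norm M)) // lerDl.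
apply: le_trans (ler_wpM2r (ltW (divr_gt0 e0 M1)) MM) _.
by rewrite mulrC divfK ?gt_eqF.
Qed.

Lemma vanishingMr f g : vanishing f -> bounded1 g -> vanishing (fun t => f t * g t).
Proof. by move=> hf hg; apply: eq_vanishing (vanishingMl hg hf) => t _; rewrite mulrC. Qed.

Lemma vanishing_sum (I : Type) (s : seq I) (F : I -> R -> R) :
  (forall i, vanishing (F i)) -> vanishing (fun t => \sum_(i <- s) F i t).
Proof.
move=> hF; elim: s => [|a s IH].
  by apply: eq_vanishing vanishing0 => t _; rewrite big_nil.
by apply: eq_vanishing (vanishingD (hF a) IH) => t _; rewrite big_cons.
Qed.

Lemma vanishing_sqr f g : (forall t, 1 <= t -> f t ^+ 2 <= g t) -> vanishing g -> vanishing f.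
Proof.
move=> fg hg e e0; have [A hA] := hg (e ^+ 2) (exprn_gt0 2 e0).
exists (maxr A 1) => t; rewrite ge_max => /andP[tA t1].
have : `|f t| ^+ 2 <= e ^+ 2.
  rewrite real_normK ?num_real // (le_trans (fg t t1)) //.
  exact: le_trans (ler_norm _) (hA t tA).
by have := normr_ge0 (f t); nra.
Qed.

Lemma vanishing_cauchy_oo f : vanishing f -> cauchy_oo f.
Proof.
move=> hf e e0; have [A hA] := hf (e / 2) (divr_gt0 e0 (ltr0n _ 2)).
by exists A => s t sA tA; rewrite (le_trans (ler_normB _ _)) // (splitr e) lerD ?hA.
Qed.

Lemma nonincreasing_cauchy_oo f :
  (forall s t, 1 <= s -> s <= t -> f t <= f s) -> (forall t, 1 <= t -> 0 <= f t) ->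
  cauchy_oo f.
Proof.
move=> f_dec f_ge0 e e0.
have hE : has_inf (f @` [set t | 1 <= t]).
  split; first by exists (f 1); exists 1 => //=.
  by exists 0 => _ [t t1 <-]; exact: f_ge0.
have [_ [t0 t01 <-] Ht0] := inf_adherent e0 hE.
have lb := ge_inf hE.2.
exists t0 => s t t0s t0t.
have fs : inf (f @` [set t | 1 <= t]) <= f s.
  by apply: lb; exists s => //=; exact: le_trans t01 t0s.
have ft : inf (f @` [set t | 1 <= t]) <= f t.
  by apply: lb; exists t => //=; exact: le_trans t01 t0t.
have := f_dec t0 s t01 t0s; have := f_dec t0 t t01 t0t.
by move=> h1 h2; rewrite ler_norml; apply/andP; split; lra.
Qed.

Lemma MVT_pos (f df : R -> R) (a b : R) : 0 < a -> a <= b ->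
  (forall t : R, 0 < t -> is_derive t 1 f (df t)) ->
  exists2 c, a <= c <= b & f b - f a = df c * (b - a).
Proof.
move=> a0 ab hf.
have hf' x : x \in `]a, b[%R -> is_derive x 1 f (df x).
  by rewrite in_itv /= => /andP[ax _]; apply: hf; exact: lt_trans ax.
have cf : {within `[a, b], continuous f}.
  apply: derivable_within_continuous => x; rewrite in_itv /= => /andP[ax _].
  by have [] := hf x (lt_le_trans a0 ax).
have [c] := MVT_segment ab hf' cf.
by rewrite in_itv /= => cab ->; exists c.
Qed.

Lemma lipschitz_of_bounded_derive (f df : R -> R) K :
  (forall t : R, 0 < t -> is_derive t 1 f (df t)) -> (forall t, 1 <= t -> `|df t| <= K) ->
  forall s t, 1 <= s -> 1 <= t -> `|f s - f t| <= K * `|s - t|.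
Proof.
move=> hf hK; suff le_st s t : 1 <= s -> s <= t -> `|f s - f t| <= K * `|s - t|.
  move=> s t s1 t1; case: (leP s t) => st; first exact: le_st.
  by rewrite distrC [`|s - t|]distrC le_st // ltW.
move=> s1 st; rewrite distrC [`|s - t|]distrC.
have [c /andP[sc ct] ->] := MVT_pos (lt_le_trans ltr01 s1) st hf.
rewrite normrM ler_wpM2r //.
by apply: hK; exact: le_trans s1 sc.
Qed.

Lemma barbalat (f df h dh u : R -> R) :
  (forall t : R, 0 < t -> is_derive t 1 f (df t)) ->
  (forall t : R, 0 < t -> is_derive t 1 h (dh t)) -> bounded1 dh ->
  (forall t, 1 <= t -> df t = h t + u t) ->
  cauchy_oo f -> vanishing u -> vanishing h.
Proof.
(* Between t and t + d the increment of [f] is small, so [f'] is small at some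
   [c], hence so is [h c], and [h t] is close to [h c] by the Lipschitz bound. *)
move=> hf hh [L hdh] dfE cf hu e e0.
have hL := lipschitz_of_bounded_derive hh hdh.
pose K := `|L| + 1; have K0 : 0 < K by rewrite ltr_wpDl.
pose d := e / (2 * K); have d0 : 0 < d by rewrite divr_gt0 // mulr_gt0.
have [A1 hA1] := hu (e / 4) (divr_gt0 e0 (ltr0n _ 4)).
have [A2 hA2] := cf (e * d / 8) (divr_gt0 (mulr_gt0 e0 d0) (ltr0n _ 8)).
exists (maxr 1 (maxr A1 A2)) => t; rewrite !ge_max => /and3P[t1 tA1 tA2].
have tdt : t <= t + d by rewrite lerDl ltW.
have [c /andP[tc ctd] fE] := MVT_pos (lt_le_trans ltr01 t1) tdt hf.
have c1 : 1 <= c := le_trans t1 tc.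
have dfc : `|df c| <= e / 8.
  have := hA2 (t + d) t (le_trans tA2 tdt) tA2.
  rewrite fE addrAC subrr add0r normrM (gtr0_norm d0) => dfd.
  by rewrite -(ler_pM2r d0) (le_trans dfd) // mulrAC.
have uc : `|u c| <= e / 4 by apply: hA1; exact: le_trans tA1 tc.
have htc : `|h t - h c| <= e / 2.
  apply: le_trans (hL t c t1 c1) _.
  have tcd : `|t - c| <= d by rewrite distrC ger0_norm ?subr_ge0 //; lra.
  have <- : K * d = e / 2 by rewrite /d; field; rewrite gt_eqF.
  apply: le_trans (ler_wpM2l (ltW K0) tcd).
  by rewrite ler_wpM2r // (le_trans (ler_norm L)) // lerDl.
have hc : `|h c| <= `|df c| + `|u c|.
  have -> : h c = df c - u c by rewrite dfE // addrK.
  exact: ler_normB.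
have := ler_normD (h t - h c) (h c); rewrite subrK; lra.
Qed.

End Asymptotics.

Section MatrixCalculus.
Variable R : realType.

Lemma is_derive_ext (W : normedModType R) (f g : R -> W) (t : R) (df : W) :
  (forall x, f x = g x) -> is_derive t 1 f df -> is_derive t 1 g df.
Proof. by move=> fg; have -> : g = f by apply/funext => x; rewrite fg. Qed.

Lemma is_derive_add (W : normedModType R) (f g : R -> W) (t : R) (df dg : W) :
  is_derive t 1 f df -> is_derive t 1 g dg ->
  is_derive t 1 (fun x => f x + g x) (df + dg).
Proof. by move=> hf hg; have := is_deriveD hf hg. Qed.

Lemma is_derive_sub (W : normedModType R) (f g : R -> W) (t : R) (df dg : W) :
  is_derive t 1 f df -> is_derive t 1 g dg ->
  is_derive t 1 (fun x => f x - g x) (df - dg).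
Proof. by move=> hf hg; apply: is_derive_add => //; have := is_deriveN hg. Qed.

Lemma is_derive_mul (f g : R -> R) (t : R) (df dg : R) :
  is_derive t 1 f df -> is_derive t 1 g dg ->
  is_derive t 1 (fun x => f x * g x) (df * g t + f t * dg).
Proof.
by move=> hf hg; apply: (is_derive_eq (is_deriveM hf hg)); rewrite addrC [df * _]mulrC.
Qed.

Lemma is_derive_sum_fun (W : normedModType R) (I : Type) (s : seq I)
    (F : I -> R -> W) (dF : I -> W) (t : R) :
  (forall i, is_derive t 1 (F i) (dF i)) ->
  is_derive t 1 (fun x => \sum_(i <- s) F i x) (\sum_(i <- s) dF i).
Proof.
move=> hF; elim: s => [|a s IH].
  by rewrite big_nil; apply: is_derive_ext (is_derive_cst 0 t 1) => x; rewrite big_nil.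
by rewrite big_cons; apply: is_derive_ext (is_derive_add (hF a) IH) => x; rewrite big_cons.
Qed.

Lemma is_derive_mx_entry p q (M : R -> 'M[R]_(p, q)) (t : R) (D : 'M[R]_(p, q)) i j :
  is_derive t 1 M D -> is_derive t 1 (fun x => M x i j) (D i j).
Proof.
move=> hM; have dM : derivable M t 1 by case: hM.
have := derive_mx dM; rewrite derive_val => ->; rewrite mxE.
by apply: derivableP; exact: ((derivable_mxP M t 1).1 dM i j).
Qed.

Lemma is_derive_mx p q (M : R -> 'M[R]_(p, q)) (t : R) (D : 'M[R]_(p, q)) :
  (forall i j, is_derive t 1 (fun x => M x i j) (D i j)) -> is_derive t 1 M D.
Proof.
move=> hM; have dM : derivable M t 1 by apply/derivable_mxP => i j; case: (hM i j).
apply: DeriveDef => //; rewrite (derive_mx dM).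
by apply/matrixP => i j; rewrite mxE derive_val.
Qed.

Lemma is_derive_mulmx p q s (A : R -> 'M[R]_(p, q)) (B : R -> 'M[R]_(q, s)) (t : R)
    (dA : 'M[R]_(p, q)) (dB : 'M[R]_(q, s)) :
  is_derive t 1 A dA -> is_derive t 1 B dB ->
  is_derive t 1 (fun x => A x *m B x) (dA *m B t + A t *m dB).
Proof.
move=> hA hB; apply: is_derive_mx => i j; rewrite !mxE -big_split /=.
apply: is_derive_ext (fun x => esym (mxE _ _ _ _)) _.
by apply: is_derive_sum_fun => k; apply: is_derive_mul; exact: is_derive_mx_entry.
Qed.

Lemma is_derive_mulmxl p q (M : 'M[R]_(p, q)) (v : R -> 'cV[R]_q) (t : R) (dv : 'cV[R]_q) :
  is_derive t 1 v dv -> is_derive t 1 (fun x => M *m v x) (M *m dv).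
Proof.
by move=> hv; have := is_derive_mulmx (is_derive_cst M t 1) hv; rewrite mul0mx add0r.
Qed.

Lemma is_derive_trmx p q (A : R -> 'M[R]_(p, q)) (t : R) (dA : 'M[R]_(p, q)) :
  is_derive t 1 A dA -> is_derive t 1 (fun x => (A x)^T) dA^T.
Proof.
move=> hA; apply: is_derive_mx => i j; rewrite mxE.
by apply: is_derive_ext (fun x => esym (mxE _ _ _ _)) _; exact: is_derive_mx_entry.
Qed.

Definition bounded1_mx p q (F : R -> 'M[R]_(p, q)) := forall i j, bounded1 (fun t => F t i j).
Definition vanishing_mx p q (F : R -> 'M[R]_(p, q)) := forall i j, vanishing (fun t => F t i j).

Lemma bounded1_mx_cst p q (C : 'M[R]_(p, q)) : bounded1_mx (fun _ => C).
Proof. by move=> i j; exact: bounded1_cst. Qed.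

Lemma eq_bounded1_mx p q (F G : R -> 'M[R]_(p, q)) :
  (forall t, 1 <= t -> F t = G t) -> bounded1_mx F -> bounded1_mx G.
Proof. by move=> FG hF i j; apply: eq_bounded1 (hF i j) => t t1; rewrite FG. Qed.

Lemma bounded1_mxD p q (F G : R -> 'M[R]_(p, q)) :
  bounded1_mx F -> bounded1_mx G -> bounded1_mx (fun t => F t + G t).
Proof.
by move=> hF hG i j; apply: eq_bounded1 (bounded1D (hF i j) (hG i j)) => t _; rewrite mxE.
Qed.

Lemma bounded1_mxN p q (F : R -> 'M[R]_(p, q)) :
  bounded1_mx F -> bounded1_mx (fun t => - F t).
Proof. by move=> hF i j; apply: eq_bounded1 (bounded1N (hF i j)) => t _; rewrite mxE. Qed.

Lemma bounded1_mxB p q (F G : R -> 'M[R]_(p, q)) :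
  bounded1_mx F -> bounded1_mx G -> bounded1_mx (fun t => F t - G t).
Proof. by move=> hF hG; apply: bounded1_mxD => //; exact: bounded1_mxN. Qed.

Lemma bounded1_mxM p q s (F : R -> 'M[R]_(p, q)) (G : R -> 'M[R]_(q, s)) :
  bounded1_mx F -> bounded1_mx G -> bounded1_mx (fun t => F t *m G t).
Proof.
move=> hF hG i j.
apply: eq_bounded1 (bounded1_sum _ (fun k => bounded1M (hF i k) (hG k j))) => t _.
by rewrite mxE.
Qed.

Lemma bounded1_mx_tr p q (F : R -> 'M[R]_(p, q)) :
  bounded1_mx F -> bounded1_mx (fun t => (F t)^T).
Proof. by move=> hF i j; apply: eq_bounded1 (hF j i) => t _; rewrite mxE. Qed.

Lemma bounded1_mx_sum p q (I : Type) (s : seq I) (F : I -> R -> 'M[R]_(p, q)) :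
  (forall k, bounded1_mx (F k)) -> bounded1_mx (fun t => \sum_(k <- s) F k t).
Proof.
move=> hF i j; apply: eq_bounded1 (bounded1_sum s (fun k => hF k i j)) => t _.
by rewrite summxE.
Qed.

Lemma eq_vanishing_mx p q (F G : R -> 'M[R]_(p, q)) :
  (forall t, 1 <= t -> F t = G t) -> vanishing_mx F -> vanishing_mx G.
Proof. by move=> FG hF i j; apply: eq_vanishing (hF i j) => t t1; rewrite FG. Qed.

Lemma vanishing_mxD p q (F G : R -> 'M[R]_(p, q)) :
  vanishing_mx F -> vanishing_mx G -> vanishing_mx (fun t => F t + G t).
Proof.
by move=> hF hG i j; apply: eq_vanishing (vanishingD (hF i j) (hG i j)) => t _; rewrite mxE.
Qed.

Lemma vanishing_mxN p q (F : R -> 'M[R]_(p, q)) :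
  vanishing_mx F -> vanishing_mx (fun t => - F t).
Proof. by move=> hF i j; apply: eq_vanishing (vanishingN (hF i j)) => t _; rewrite mxE. Qed.

Lemma vanishing_mxB p q (F G : R -> 'M[R]_(p, q)) :
  vanishing_mx F -> vanishing_mx G -> vanishing_mx (fun t => F t - G t).
Proof. by move=> hF hG; apply: vanishing_mxD => //; exact: vanishing_mxN. Qed.

Lemma vanishing_mxMl p q s (F : R -> 'M[R]_(p, q)) (G : R -> 'M[R]_(q, s)) :
  bounded1_mx F -> vanishing_mx G -> vanishing_mx (fun t => F t *m G t).
Proof.
move=> hF hG i j.
apply: eq_vanishing (vanishing_sum _ (fun k => vanishingMl (hF i k) (hG k j))) => t _.
by rewrite mxE.
Qed.

Lemma vanishing_mxMr p q s (F : R -> 'M[R]_(p, q)) (G : R -> 'M[R]_(q, s)) :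
  vanishing_mx F -> bounded1_mx G -> vanishing_mx (fun t => F t *m G t).
Proof.
move=> hF hG i j.
apply: eq_vanishing (vanishing_sum _ (fun k => vanishingMr (hF i k) (hG k j))) => t _.
by rewrite mxE.
Qed.

Lemma vanishing_mx_tr p q (F : R -> 'M[R]_(p, q)) :
  vanishing_mx F -> vanishing_mx (fun t => (F t)^T).
Proof. by move=> hF i j; apply: eq_vanishing (hF j i) => t _; rewrite mxE. Qed.

Lemma vanishing_mxZ p q (c : R -> R) (F : R -> 'M[R]_(p, q)) :
  vanishing c -> bounded1_mx F -> vanishing_mx (fun t => c t *: F t).
Proof. by move=> hc hF i j; apply: eq_vanishing (vanishingMr hc (hF i j)) => t _; rewrite mxE. Qed.

Lemma vanishing_mx_col k (v : R -> 'cV[R]_k) :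
  (forall a, vanishing (fun t => v t a 0)) -> vanishing_mx v.
Proof. by move=> hv i j; rewrite ord1. Qed.

Lemma mx_entry_le_norm p q (M : 'M[R]_(p, q)) i j : `|M i j| <= `|M|.
Proof.
rewrite [leRHS]/Num.Def.normr /= mx_normrE.
by apply/bigmax_geP; right => /=; exists (i, j).
Qed.

Lemma vanishing_mx_cvg p q (F : R -> 'M[R]_(p, q)) :
  vanishing_mx F -> F t @[t --> +oo] --> (0 : 'M[R]_(p, q)).
Proof.
move=> hF; apply/cvgrPdist_le => e e0.
have hFe (k : 'I_p * 'I_q) : \forall t \near +oo, `|F t k.1 k.2| <= e.
  have [A hA] := hF k.1 k.2 e e0.
  by near=> t; apply: hA; near: t; apply: nbhs_pinfty_ge; exact: num_real.
near=> t.
rewrite sub0r normrN [leLHS]/Num.Def.normr /= mx_normrE (bigmax_le _ (ltW e0)) //= => k _.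
by move: k; near: t; apply: filter_forall => k; exact: hFe.
Unshelve. all: by end_near. Qed.

End MatrixCalculus.

Section BarbalatMatrix.
Variable R : realType.

Lemma barbalat_mx p q (F dF H dH U : R -> 'M[R]_(p, q)) :
  (forall t : R, 0 < t -> is_derive t 1 F (dF t)) ->
  (forall t : R, 0 < t -> is_derive t 1 H (dH t)) -> bounded1_mx dH ->
  (forall t, 1 <= t -> dF t = H t + U t) ->
  vanishing_mx F -> vanishing_mx U -> vanishing_mx H.
Proof.
move=> hF hH bdH dFE vF vU i j.
apply: (@barbalat _ (fun t => F t i j) (fun t => dF t i j) _ (fun t => dH t i j)
                    (fun t => U t i j)) => //.
- by move=> t t0; exact: is_derive_mx_entry (hF t t0).
- by move=> t t0; exact: is_derive_mx_entry (hH t t0).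
- by move=> t t1; rewrite dFE // mxE.
- exact: vanishing_cauchy_oo.
Qed.

End BarbalatMatrix.

Section DotProduct.
Variable R : realType.
Implicit Types k l : nat.

Definition dot k (u v : 'cV[R]_k) : R := (u^T *m v) 0 0.

Lemma dotE k (u v : 'cV[R]_k) : dot u v = \sum_i u i 0 * v i 0.
Proof. by rewrite /dot mxE; apply: eq_bigr => i _; rewrite mxE. Qed.

Lemma dotC k (u v : 'cV[R]_k) : dot u v = dot v u.
Proof. by rewrite !dotE; apply: eq_bigr => i _; rewrite mulrC. Qed.

Lemma dotDl k (u v w : 'cV[R]_k) : dot (u + v) w = dot u w + dot v w.
Proof. by rewrite /dot linearD /= mulmxDl mxE. Qed.

Lemma dotDr k (u v w : 'cV[R]_k) : dot u (v + w) = dot u v + dot u w.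
Proof. by rewrite /dot mulmxDr mxE. Qed.

Lemma dotNl k (u w : 'cV[R]_k) : dot (- u) w = - dot u w.
Proof. by rewrite /dot linearN /= mulNmx mxE. Qed.

Lemma dotNr k (u w : 'cV[R]_k) : dot u (- w) = - dot u w.
Proof. by rewrite /dot mulmxN mxE. Qed.

Lemma dotBl k (u v w : 'cV[R]_k) : dot (u - v) w = dot u w - dot v w.
Proof. by rewrite dotDl dotNl. Qed.

Lemma dot0r k (u : 'cV[R]_k) : dot u 0 = 0.
Proof. by rewrite /dot mulmx0 mxE. Qed.

Lemma dot_mulmxl k l (M : 'M[R]_(l, k)) (u : 'cV[R]_k) (v : 'cV[R]_l) :
  dot (M *m u) v = dot u (M^T *m v).
Proof. by rewrite /dot trmx_mul mulmxA. Qed.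

Lemma dot_mulmxr k l (u : 'cV[R]_k) (M : 'M[R]_(k, l)) (v : 'cV[R]_l) :
  dot u (M *m v) = dot (M^T *m u) v.
Proof. by rewrite /dot trmx_mul trmxK mulmxA. Qed.

Lemma dot_sumr k (I : Type) (s : seq I) (u : 'cV[R]_k) (F : I -> 'cV[R]_k) :
  dot u (\sum_(i <- s) F i) = \sum_(i <- s) dot u (F i).
Proof.
elim: s => [|a s IH]; first by rewrite !big_nil dot0r.
by rewrite !big_cons dotDr IH.
Qed.

Lemma dot_self_ge0 k (v : 'cV[R]_k) : 0 <= dot v v.
Proof. by rewrite dotE sumr_ge0 // => i _; rewrite -expr2 sqr_ge0. Qed.

Lemma sqr_coord_le_dot k (v : 'cV[R]_k) a : v a 0 ^+ 2 <= dot v v.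
Proof.
rewrite dotE (bigD1 a) //= -expr2 lerDl.
by apply: sumr_ge0 => i _; rewrite -expr2 sqr_ge0.
Qed.

Lemma dot_self_gt0 k (v : 'cV[R]_k) : v != 0 -> 0 < dot v v.
Proof.
move=> v0; rewrite lt_def dot_self_ge0 andbT; apply: contra v0 => /eqP vv0.
apply/eqP/matrixP => i j; rewrite ord1 mxE; apply/eqP.
by rewrite -sqrf_eq0 eq_le sqr_ge0 andbT -vv0 sqr_coord_le_dot.
Qed.

Lemma sym_posdef_dot_ge0 k (P : 'M[R]_k) (v : 'cV[R]_k) :
  sym_posdef P -> 0 <= dot v (P *m v).
Proof.
move=> [_ hP]; have [->|v0] := eqVneq v 0; first by rewrite mulmx0 dot0r.
by apply: ltW; have := hP v v0; rewrite /dot mulmxA.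
Qed.

Lemma is_derive_dot k (u v : R -> 'cV[R]_k) (t : R) (du dv : 'cV[R]_k) :
  is_derive t 1 u du -> is_derive t 1 v dv ->
  is_derive t 1 (fun s => dot (u s) (v s)) (dot du (v t) + dot (u t) dv).
Proof.
move=> hu hv; have := is_derive_mx_entry 0 0 (is_derive_mulmx (is_derive_trmx hu) hv).
by rewrite mxE.
Qed.

Lemma bounded1_dot k (u v : R -> 'cV[R]_k) :
  bounded1_mx u -> bounded1_mx v -> bounded1 (fun t => dot (u t) (v t)).
Proof. by move=> hu hv; exact: bounded1_mxM (bounded1_mx_tr hu) hv 0 0. Qed.

Lemma vanishing_dot k (u v : R -> 'cV[R]_k) :
  vanishing_mx u -> bounded1_mx v -> vanishing (fun t => dot (u t) (v t)).
Proof. by move=> hu hv; exact: vanishing_mxMr (vanishing_mx_tr hu) hv 0 0. Qed.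

End DotProduct.

Section CrossProduct.
Variable R : realType.

Lemma sum_ord3 (F : 'I_3 -> R) : \sum_(i < 3) F i = F (inord 0) + F (inord 1) + F (inord 2).
Proof.
rewrite !big_ord_recr big_ord0 /= add0r.
by congr (_ + _ + _); congr F; apply: val_inj; rewrite /= inordK.
Qed.

Lemma ord3P (i : 'I_3) : [\/ i = inord 0, i = inord 1 | i = inord 2].
Proof.
by case: i => [[|[|[|k]]] hk] //; [constructor 1|constructor 2|constructor 3];
  apply: val_inj; rewrite /= inordK.
Qed.

Ltac expand3 := rewrite ?dotE; do 5 (rewrite ?mxE ?sum_ord3); rewrite ?inordK //=.
Ltac case3 i := case: (ord3P i) => ->.

Lemma tr_skewS (x : 'cV[R]_3) : (skewS x)^T = - skewS x.
Proof.
apply/matrixP => i j; rewrite !mxE.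
by case3 i; case3 j; rewrite ?inordK //= ?opprK ?oppr0.
Qed.

Lemma skewSD (x y : 'cV[R]_3) : skewS (x + y) = skewS x + skewS y.
Proof.
apply/matrixP => i j; rewrite !mxE.
by case3 i; case3 j; rewrite ?inordK //= ?mxE ?addr0 //; ring.
Qed.

Lemma dot_skewS_self (x u : 'cV[R]_3) : dot u (skewS x *m u) = 0.
Proof. by expand3; ring. Qed.

Lemma dot_skewS_swap (x b c : 'cV[R]_3) : dot b (skewS x *m c) = - dot x (skewS b *m c).
Proof. by expand3; ring. Qed.

Lemma lagrange_identity (u v : 'cV[R]_3) :
  dot (skewS u *m v) (skewS u *m v) = dot u u * dot v v - dot u v ^+ 2.
Proof. by expand3; ring. Qed.

(* Coordinates of [y] in the frame [(u, v, u x v)]: they only involve [y]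
   through [y x u] and [y x v]. *)
Lemma skewS_frame_decomposition (u v y : 'cV[R]_3) :
  dot (skewS u *m v) (skewS u *m v) *: y =
  dot (skewS y *m v) (skewS u *m v) *: u - dot (skewS y *m u) (skewS u *m v) *: v
  + dot (skewS y *m u) v *: (skewS u *m v).
Proof. by apply/matrixP => i j; rewrite ord1; case3 i; expand3; ring. Qed.

Lemma is_derive_skewS (x : R -> 'cV[R]_3) (t : R) (dx : 'cV[R]_3) :
  is_derive t 1 x dx -> is_derive t 1 (fun s => skewS (x s)) (skewS dx).
Proof.
move=> hx; apply: is_derive_mx => i j.
apply: is_derive_ext (fun s => esym (mxE _ _ _ _)) _; rewrite mxE.
case: i => [[|[|[|?]]] ?] //; case: j => [[|[|[|?]]] ?] //=;
  first [exact: is_derive_cst | exact: is_derive_mx_entry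
        | have := is_deriveN (is_derive_mx_entry _ _ hx); exact].
Qed.

Lemma bounded1_mx_skewS (x : R -> 'cV[R]_3) :
  bounded1_mx x -> bounded1_mx (fun t => skewS (x t)).
Proof.
move=> hx i j; apply: eq_bounded1 (fun t _ => esym (mxE _ _ _ _)) _.
case: i => [[|[|[|?]]] ?] //; case: j => [[|[|[|?]]] ?] //=;
  first [exact: bounded1_cst | exact: hx | apply: bounded1N; exact: hx].
Qed.

End CrossProduct.

Section PositiveDefinite.
Variable R : realType.
Implicit Types k : nat.

Lemma continuous_sum_fun (T : topologicalType) (I : Type) (s : seq I) (F : I -> T -> R) :
  (forall i, continuous (F i)) -> continuous (fun x => \sum_(i <- s) F i x).
Proof.
move=> hF; elim: s => [|a s IH].
  rewrite (_ : (fun x => _) = fun=> 0); last by apply/funext => x; rewrite big_nil.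
  by move=> x; exact: cst_continuous.
rewrite (_ : (fun x => _) = fun x => F a x + \sum_(i <- s) F i x); last first.
  by apply/funext => x; rewrite big_cons.
by move=> x; apply: continuousD; [exact: hF | exact: IH].
Qed.

Lemma continuous_quad_rV k (P : 'M[R]_k) :
  continuous (fun w : 'rV[R]_k => (w *m P *m w^T) 0 0).
Proof.
have -> : (fun w : 'rV[R]_k => (w *m P *m w^T) 0 0) =
          (fun w => \sum_b \sum_a w 0 a * P a b * w 0 b).
  by apply/funext => w; rewrite mxE; apply: eq_bigr => b _; rewrite !mxE big_distrl.
apply: continuous_sum_fun => b; apply: continuous_sum_fun => a w.
have ca : {for w, continuous (fun x : 'rV[R]_k => x 0 a)} := @coord_continuous _ _ _ 0 a w.
have cb : {for w, continuous (fun x : 'rV[R]_k => x 0 b)} := @coord_continuous _ _ _ 0 b w.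
have cP : {for w, continuous (fun x : 'rV[R]_k => P a b)} by move=> ?; exact: cst_continuous.
exact: continuousM (continuousM ca cP) cb.
Qed.

Lemma compact_unit_sphere_rV k : compact [set w : 'rV[R]_k | `|w| = 1].
Proof.
apply: bounded_closed_compact.
  rewrite /= /bounded_near; near=> M => w /= ->.
  by near: M; apply: nbhs_pinfty_ge; exact: num_real.
rewrite (_ : [set w | _] = normr @^-1` [set 1]) //.
apply: preimage_closed; last exact: closed_eq.
by move=> w _; exact: norm_continuous.
Unshelve. all: by end_near. Qed.

(* [c] is the minimum of the quadratic form on the unit sphere. *)
Lemma sym_posdef_coord_lb k (P : 'M[R]_k) : sym_posdef P ->
  exists2 c, 0 < c & forall (v : 'cV[R]_k) a, c * v a 0 ^+ 2 <= dot v (P *m v).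
Proof.
case: k P => [|k] P [Psym Ppos]; first by exists 1 => // v [].
pose f (w : 'rV[R]_k.+1) := (w *m P *m w^T) 0 0.
pose A := [set w : 'rV[R]_k.+1 | `|w| = 1].
have normalize (w : 'rV[R]_k.+1) : w != 0 -> `|w|^-1 *: w \in A.
  by move=> w0; rewrite inE /A /= normrZ normfV normr_id mulVf // normr_eq0.
have A0 : A !=set0.
  exists (`|const_mx 1 : 'rV[R]_k.+1|^-1 *: const_mx 1); rewrite -inE; apply: normalize.
  by apply/eqP => /matrixP /(_ 0 0) /eqP; rewrite !mxE oner_eq0.
have Ac : compact A := @compact_unit_sphere_rV k.+1.
have [wm wmA wmin] : exists2 wm, wm \in A & forall w, w \in A -> f wm <= f w.
  exact: EVT_min_rV A0 Ac (continuous_subspaceT (@continuous_quad_rV _ P)).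
have wm0 : wm^T != 0.
  apply/eqP => /(congr1 trmx); rewrite trmxK trmx0 => wmE.
  by move: wmA; rewrite inE /A /= wmE normr0 => /eqP; rewrite eq_sym oner_eq0.
have c0 : 0 < f wm by have := Ppos _ wm0; rewrite trmxK.
exists (f wm) => // v a; have [->|v0] := eqVneq v 0.
  by rewrite mulmx0 dot0r mxE expr0n /= mulr0.
have w0 : v^T != 0 by apply: contra v0 => /eqP/(congr1 trmx); rewrite trmxK trmx0 => ->.
have n0 : 0 < `|v^T| by rewrite normr_gt0.
have fv : f v^T = dot v (P *m v) by rewrite /f /dot trmxK mulmxA.
have := wmin _ (normalize _ w0).
have -> : f (`|v^T|^-1 *: v^T) = `|v^T|^-2 * f v^T.
  rewrite /f linearZ /= -!scalemxAl -scalemxAr !mxE mulrA -expr2 exprVn.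
  by rewrite (_ : (v^T)^T = v) ?trmxK.
move/(ler_wpM2l (exprn_ge0 2 (ltW n0))).
rewrite mulrA mulfV ?mul1r ?expf_neq0 ?gt_eqF // fv; apply: le_trans.
rewrite mulrC ler_wpM2r ?(ltW c0) //.
have -> : v a 0 = v^T 0 a by rewrite mxE.
by rewrite -(real_normK (num_real (v^T 0 a))) lerXn2r ?nnegrE // mx_entry_le_norm.
Qed.

Lemma bounded1_mx_quad k (P : 'M[R]_k) (x : R -> 'cV[R]_k) K :
  sym_posdef P -> (forall t, 1 <= t -> dot (x t) (P *m x t) <= K) -> bounded1_mx x.
Proof.
move=> hP xK a j; rewrite ord1; have [c c0 hc] := sym_posdef_coord_lb hP.
apply: (@bounded1_sqr _ _ (K / c)) => t t1.
by rewrite ler_pdivlMr // mulrC (le_trans (hc _ a)) ?xK.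
Qed.

Lemma vanishing_mx_quad k (P : 'M[R]_k) (x : R -> 'cV[R]_k) (g : R -> R) :
  sym_posdef P -> (forall t, 1 <= t -> dot (x t) (P *m x t) <= g t) ->
  vanishing g -> vanishing_mx x.
Proof.
move=> hP xg hg; have [c c0 hc] := sym_posdef_coord_lb hP.
apply: vanishing_mx_col => a.
apply: (@vanishing_sqr _ _ (fun t => g t / c)); last exact: vanishingMr hg (bounded1_cst _).
by move=> t t1; rewrite ler_pdivlMr // mulrC (le_trans (hc _ a)) ?xg.
Qed.

Lemma sym_posdef1 k : sym_posdef (1%:M : 'M[R]_k).
Proof.
split; first exact: trmx1.
by move=> v v0; rewrite mulmx1 -[X in 0 < X]/(dot v v) dot_self_gt0.
Qed.

Lemma posdef_diag_unitmx k (G : 'M[R]_k) : posdef_diag G ->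
  G \in unitmx /\ invmx G = diag_mx (\row_i ((G i i)^-1)).
Proof.
move=> [d [dpos ->]]; pose D := diag_mx (\row_i ((diag_mx d i i)^-1)).
have DG : D *m diag_mx d = 1%:M.
  rewrite mulmx_diag; apply/matrixP => i j; rewrite !mxE eqxx mulr1n.
  by case: (i == j); rewrite ?mulr1n ?mulr0n // mulVf // gt_eqF.
have [_ Gu] := mulmx1_unit DG; split => //.
by rewrite -[invmx _]mul1mx -DG -mulmxA mulmxV // mulmx1.
Qed.

Lemma posdef_diag_invmx k (G : 'M[R]_k) : posdef_diag G -> sym_posdef (invmx G).
Proof.
move=> hG; have [_ ->] := posdef_diag_unitmx hG; have [d [dpos Gd]] := hG.
have Gii i : 0 < (G i i)^-1 by rewrite Gd mxE eqxx mulr1n invr_gt0.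
split; first exact: tr_diag_mx.
move=> v v0; rewrite -mulmxA -[X in 0 < X]/(dot v _) dotE.
have [a va] : exists a, v a 0 != 0.
  apply/existsP; apply: contraR v0 => /existsPn v0.
  by apply/eqP/matrixP => i j; rewrite ord1 mxE; apply/eqP; rewrite -[_ == 0]negbK v0.
have term_ge0 i : 0 <= v i 0 * (diag_mx (\row_i (G i i)^-1) *m v) i 0.
  by rewrite mul_diag_mx !mxE mulrCA -expr2 mulr_ge0 ?sqr_ge0 ?ltW.
rewrite (bigD1 a) //= ltr_pwDl ?sumr_ge0 //.
by rewrite mul_diag_mx !mxE mulrCA -expr2 mulr_gt0 // lt_def sqr_ge0 sqrf_eq0 va.
Qed.

End PositiveDefinite.

Section FilterMatrices.
Variable R : realType.

(* [g n] is the value at [0] of the polynomial, so [g n = 0] would make [0] a root. *)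
Lemma hurwitz_charpoly_last_neq0 n (g : nat -> R) :
  (1 <= n)%N -> hurwitz (charpoly_of n g) -> g n != 0.
Proof.
move=> n1 hH; apply/negP => /eqP g0.
have p0 : (charpoly_of n g).[0] = 0.
  rewrite /charpoly_of hornerD hornerXn expr0n /= gtn_eqF // add0r horner_sum.
  rewrite big_nat_recr //= big1_seq ?add0r.
    by rewrite hornerM hornerC hornerXn subnn expr0 mulr1 g0.
  move=> k /andP[_]; rewrite mem_iota => /andP[k1 kn].
  by rewrite hornerM hornerC hornerXn expr0n subn_eq0 leqNgt (_ : (k < n)%N) ?mulr0 //; lia.
have := hH 0; rewrite /root horner_coef0 coef_map_id0 //.
by rewrite -horner_coef0 p0 /= eqxx => /(_ isT); rewrite lt_irreflexive.
Qed.

Lemma kron_idx_bij p q : bijective (@kron_idx p q).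
Proof.
exists (fun z => cast_ord (mxvec_cast p q) (enum_rank z)) => r /=.
  by rewrite /kron_idx enum_valK cast_ordKV.
by rewrite /kron_idx cast_ordK enum_rankK.
Qed.

Lemma sum_kron_idx p q (G : 'I_p * 'I_q -> R) :
  \sum_(r < p * q) G (kron_idx r) = \sum_x \sum_y G (x, y).
Proof.
rewrite pair_big /=; symmetry.
rewrite (reindex (@kron_idx p q)) /=; last exact/onW_bij/kron_idx_bij.
by apply: eq_bigr => r _; rewrite -surjective_pairing.
Qed.

Lemma trBp_mulBp n (g : nat -> R) : (1 <= n.-1)%N ->
  (Bp n g)^T *m Bp n g = g n ^+ 2 *: 1%:M.
Proof.
move=> p1; apply/matrixP => a b; set p := n.-1.
pose G (a2 b2 : 'I_3) (z : 'I_p * 'I_3) :=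
  (g n * ((if z.1 == p.-1 :> nat then 1 else 0) * (z.2 == a2)%:R))
  * (g n * ((if z.1 == p.-1 :> nat then 1 else 0) * (z.2 == b2)%:R)).
rewrite mxE (eq_bigr (fun r => G (@kron_idx 1 3 a).2
                                  (@kron_idx 1 3 b).2 (@kron_idx p 3 r))); last first.
  by move=> r _; rewrite !mxE.
have hp : (p.-1 < p)%N by rewrite /p; lia.
rewrite sum_kron_idx (bigD1 (Ordinal hp)) //= [X in _ + X]big1 ?addr0; last first.
  move=> x /eqP xne; apply: big1 => y _; rewrite /G /=.
  have -> : (x == p.-1 :> nat) = false by apply/negbTE/eqP => E; apply: xne; exact: val_inj.
  by rewrite !mul0r !mulr0.
rewrite /G /= eqxx (bigD1 (@kron_idx 1 3 a).2) //= eqxx [X in _ + X]big1 ?addr0;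
  last by move=> y /negbTE ->; rewrite !mulr0 mul0r.
rewrite !mxE !mul1r; have [->|ab] := eqVneq a b; first by rewrite eqxx /= !mulr1 expr2.
case: eqP => E; last by rewrite /= !mulr0.
have : @kron_idx 1 3 a = @kron_idx 1 3 b.
  by rewrite [@kron_idx 1 3 a]surjective_pairing [@kron_idx 1 3 b]surjective_pairing E !ord1.
by move/(bij_inj (kron_idx_bij 1 3))/eqP; rewrite (negbTE ab).
Qed.

End FilterMatrices.

Section EnergyIdentities.
Variable R : realType.

Lemma filter_energy_derivative k (A P Q : 'M[R]_k) (B : 'M[R]_(k, 3)) (X : 'cV[R]_k)
    (e bh w et : 'cV[R]_3) :
  A^T *m P + P *m A = - Q -> P^T = P ->
  let dX := A *m X + B *m e in
  let de := - (skewS w *m e) + skewS et *m bh - B^T *m P *m X in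
  dot dX (P *m X) + dot X (P *m dX) + (dot de e + dot e de)
  = - dot X (Q *m X) + 2 * dot e (skewS et *m bh).
Proof.
move=> hL hP dX de; rewrite [dot de e]dotC /dX /de.
rewrite !dotDl !dotDr ?dotNr ?dotNl dot_skewS_self ?oppr0 ?add0r.
rewrite !dot_mulmxl mulmxDr !dotDr.
have AQ : dot X (A^T *m (P *m X)) + dot X (P *m (A *m X)) = - dot X (Q *m X).
  by rewrite -dotDr !mulmxA -mulmxDl hL mulNmx dotNr.
have BP : dot X (P *m (B *m e)) = dot e (B^T *m P *m X).
  by rewrite mulmxA dot_mulmxr trmx_mul hP dotC.
rewrite BP [B^T *m (P *m X)]mulmxA; move: AQ.
set a1 := dot X (A^T *m _); set a2 := dot X (P *m (A *m X)) => AQ.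
have -> : a1 + dot e (B^T *m P *m X) + (a2 + dot e (B^T *m P *m X)) =
  (a1 + a2) + 2 * dot e (B^T *m P *m X) by ring.
by rewrite AQ; ring.
Qed.

Lemma gain_energy_derivative (G Gi : 'M[R]_3) (s et : 'cV[R]_3) :
  Gi *m G = 1%:M -> Gi^T = Gi ->
  dot (G *m s) (Gi *m et) + dot et (Gi *m (G *m s)) = 2 * dot et s.
Proof. by move=> GiG Gisym; rewrite dotC dot_mulmxl Gisym !mulmxA GiG !mul1mx; ring. Qed.

Lemma dot_sub_skewS (b bh et : 'cV[R]_3) :
  dot (b - bh) (skewS et *m bh) = - dot et (skewS b *m bh).
Proof. by rewrite dotBl dot_skewS_self subr0 dot_skewS_swap. Qed.

End EnergyIdentities.

Section PassiveFilter.
Variables (R : realType) (n m : nat).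
Hypothesis hn : (2 <= n)%N.
Variable gamma : 'I_m -> nat -> R.
Hypothesis hH1 : forall i, hurwitz (charpoly_of n (gamma i)).
Variables Q P : 'I_m -> 'M[R]_(n.-1 * 3).
Hypotheses (hQ : forall i, sym_posdef (Q i)) (hP : forall i, sym_posdef (P i)).
Hypothesis hLyap :
  forall i, (Ap n (gamma i))^T *m P i + P i *m Ap n (gamma i) = - Q i.
Variable Gam : 'M[R]_3.
Hypothesis hG : posdef_diag Gam.
Variables (r : 'I_m -> 'cV[R]_3) (Rot : R -> 'M[R]_3) (om : R -> 'cV[R]_3).
Variable eta : 'cV[R]_3.
Hypothesis hSO : forall t : R, 0 <= t -> in_SO3 (Rot t).
Hypothesis hRot : forall t : R, 0 < t -> is_derive t (1 : R) Rot (Rot t *m skewS (om t)).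
Hypothesis hom : exists M : R, forall t : R, 0 <= t -> `|om t| <= M.
Hypothesis hnc : exists i j : 'I_m, forall t : R, 0 <= t ->
  skewS ((Rot t)^T *m r i) *m ((Rot t)^T *m r j) != 0.
Variables (X : 'I_m -> R -> 'cV[R]_(n.-1 * 3)) (bh : 'I_m -> R -> 'cV[R]_3).
Variable etah : R -> 'cV[R]_3.
Hypothesis hX : forall i (t : R), 0 < t ->
  is_derive t (1 : R) (X i)
    (Ap n (gamma i) *m X i t + Bp n (gamma i) *m ((Rot t)^T *m r i - bh i t)).
Hypothesis hbh : forall i (t : R), 0 < t ->
  is_derive t (1 : R) (bh i)
    (- (skewS (om t + eta - etah t) *m bh i t) + (Bp n (gamma i))^T *m P i *m X i t).
Hypothesis hetah : forall t : R, 0 < t ->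
  is_derive t (1 : R) etah (- (Gam *m \sum_(i < m) skewS ((Rot t)^T *m r i) *m bh i t)).

Let A i := Ap n (gamma i).
Let B i := Bp n (gamma i).
Let b i t := (Rot t)^T *m r i.
Let e i t := b i t - bh i t.
Let et t := eta - etah t.
Let Gi := invmx Gam.

Let dX i t := A i *m X i t + B i *m e i t.
Let de i t := - (skewS (om t) *m e i t) + skewS (et t) *m bh i t - (B i)^T *m P i *m X i t.
Let dbh i t := - (skewS (om t + eta - etah t) *m bh i t) + (B i)^T *m P i *m X i t.
Let det t := Gam *m \sum_(i < m) skewS (b i t) *m bh i t.

Let V t := \sum_(i < m) (dot (X i t) (P i *m X i t) + dot (e i t) (e i t))
           + dot (et t) (Gi *m et t).
Let W t := \sum_(i < m) dot (X i t) (Q i *m X i t).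

Lemma derive_e i (t : R) : 0 < t -> is_derive t 1 (e i) (de i t).
Proof.
move=> t0; have db : is_derive t 1 (b i) (- (skewS (om t) *m b i t)).
  apply: (is_derive_eq (is_derive_mulmx (is_derive_trmx (hRot t0)) (is_derive_cst (r i) t 1))).
  by rewrite mulmx0 addr0 trmx_mul tr_skewS !mulNmx -mulmxA.
apply: (is_derive_eq (is_derive_sub db (hbh i t0))).
rewrite /de /e /et -addrA (skewSD (om t) (eta - etah t)) mulmxDl mulmxBr.
by rewrite !opprD !opprK !addrA.
Qed.

Lemma derive_et (t : R) : 0 < t -> is_derive t 1 et (det t).
Proof.
move=> t0; apply: (is_derive_eq (is_derive_sub (is_derive_cst eta t 1) (hetah t0))).
by rewrite sub0r opprK.
Qed.

Lemma derive_V (t : R) : 0 < t -> is_derive t 1 V (- W t).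
Proof.
move=> t0; have [Gu _] := posdef_diag_unitmx hG.
have [Gisym _] := posdef_diag_invmx hG.
apply: (is_derive_eq (is_derive_add (is_derive_sum_fun (index_enum 'I_m) (fun i =>
  is_derive_add (is_derive_dot (hX i t0) (is_derive_mulmxl (P i) (hX i t0)))
                (is_derive_dot (derive_e i t0) (derive_e i t0))))
  (is_derive_dot (derive_et t0) (is_derive_mulmxl Gi (derive_et t0))))).
rewrite (eq_bigr (fun i =>
  - dot (X i t) (Q i *m X i t) + 2 * dot (e i t) (skewS (et t) *m bh i t)));
  last by move=> i _; apply: filter_energy_derivative; [exact: hLyap | exact: (hP i).1].
rewrite big_split /= sumrN -big_distrr /= gain_energy_derivative ?mulVmx // dot_sumr.
have -> : \sum_(i < m) dot (e i t) (skewS (et t) *m bh i t) =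
          - \sum_(i < m) dot (et t) (skewS (b i t) *m bh i t).
  by rewrite -sumrN; apply: eq_bigr => i _; exact: dot_sub_skewS.
by rewrite /W; ring.
Qed.

Lemma V_nonincreasing (s t : R) : 1 <= s -> s <= t -> V t <= V s.
Proof.
move=> s1 st; rewrite -subr_le0.
have [c _ ->] := MVT_pos (lt_le_trans ltr01 s1) st derive_V.
rewrite mulNr oppr_le0 mulr_ge0 ?subr_ge0 // /W.
by apply: sumr_ge0 => i _; exact: sym_posdef_dot_ge0.
Qed.

Lemma V_ge_Xe i t : dot (X i t) (P i *m X i t) + dot (e i t) (e i t) <= V t.
Proof.
have Xe_ge0 j : 0 <= dot (X j t) (P j *m X j t) + dot (e j t) (e j t).
  by rewrite addr_ge0 ?dot_self_ge0 ?sym_posdef_dot_ge0.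
rewrite /V (bigD1 i) //= -addrA lerDl addr_ge0 ?sumr_ge0 //.
exact: sym_posdef_dot_ge0 (posdef_diag_invmx hG).
Qed.

Lemma V_ge_et t : dot (et t) (Gi *m et t) <= V t.
Proof.
rewrite /V lerDr sumr_ge0 // => i _.
by rewrite addr_ge0 ?dot_self_ge0 ?sym_posdef_dot_ge0.
Qed.

Lemma bounded_X i : bounded1_mx (X i).
Proof.
apply: (bounded1_mx_quad (K := V 1) (hP i)) => t t1.
apply: le_trans (V_nonincreasing (lexx 1) t1); apply: le_trans (V_ge_Xe i t).
by rewrite lerDl dot_self_ge0.
Qed.

Lemma bounded_e i : bounded1_mx (e i).
Proof.
apply: (bounded1_mx_quad (K := V 1) (sym_posdef1 _ _)) => t t1.
apply: le_trans (V_nonincreasing (lexx 1) t1); apply: le_trans (V_ge_Xe i t).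
by rewrite mul1mx lerDr sym_posdef_dot_ge0.
Qed.

Lemma bounded_et : bounded1_mx et.
Proof.
apply: (bounded1_mx_quad (K := V 1) (posdef_diag_invmx hG)) => t t1.
exact: le_trans (V_ge_et t) (V_nonincreasing (lexx 1) t1).
Qed.

Lemma dot_b i j t : 0 <= t -> dot (b i t) (b j t) = dot (r i) (r j).
Proof.
move=> t0; have [RR _] := hSO t0.
by rewrite /b dot_mulmxl trmxK mulmxA (mulmx1C RR) mul1mx.
Qed.

Lemma bounded_b i : bounded1_mx (b i).
Proof.
apply: (bounded1_mx_quad (K := dot (r i) (r i)) (sym_posdef1 _ _)) => t t1.
by rewrite mul1mx dot_b // (le_trans ler01 t1).
Qed.

Lemma bounded_bh i : bounded1_mx (bh i).
Proof.
apply: eq_bounded1_mx (bounded1_mxB (bounded_b i) (bounded_e i)) => t _.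
by rewrite /e opprB addrC subrK.
Qed.

Lemma bounded_om : bounded1_mx om.
Proof.
have [M hM] := hom; move=> a j; exists M => t t1.
exact: le_trans (mx_entry_le_norm _ _ _) (hM t (le_trans ler01 t1)).
Qed.

Lemma bounded_etah : bounded1_mx etah.
Proof.
apply: eq_bounded1_mx (bounded1_mxB (bounded1_mx_cst eta) bounded_et) => t _.
by rewrite /et opprB addrC subrK.
Qed.

Lemma bounded_dX i : bounded1_mx (dX i).
Proof.
exact: bounded1_mxD (bounded1_mxM (bounded1_mx_cst _) (bounded_X i))
                    (bounded1_mxM (bounded1_mx_cst _) (bounded_e i)).
Qed.

Lemma bounded_de i : bounded1_mx (de i).
Proof.
apply: bounded1_mxB (bounded1_mxM (bounded1_mx_cst _) (bounded_X i)).
exact: bounded1_mxD (bounded1_mxN (bounded1_mxM (bounded1_mx_skewS bounded_om) (bounded_e i)))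
                    (bounded1_mxM (bounded1_mx_skewS bounded_et) (bounded_bh i)).
Qed.

Lemma bounded_dbh i : bounded1_mx (dbh i).
Proof.
apply: bounded1_mxD (bounded1_mxM (bounded1_mx_cst _) (bounded_X i)).
apply/bounded1_mxN/(bounded1_mxM _ (bounded_bh i))/bounded1_mx_skewS.
exact: bounded1_mxB (bounded1_mxD bounded_om (bounded1_mx_cst eta)) bounded_etah.
Qed.

Lemma bounded_det : bounded1_mx det.
Proof.
apply: bounded1_mxM (bounded1_mx_cst _) (bounded1_mx_sum _ _) => i.
exact: bounded1_mxM (bounded1_mx_skewS (bounded_b i)) (bounded_bh i).
Qed.

Lemma vanishing_W : vanishing W.
Proof.
pose dW t := \sum_(i < m) (dot (dX i t) (Q i *m X i t) + dot (X i t) (Q i *m dX i t)).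
have hV t : 1 <= t -> 0 <= V t.
  by move=> _; apply: le_trans (V_ge_et t); exact: sym_posdef_dot_ge0 (posdef_diag_invmx hG).
apply: eq_vanishing (fun t _ => opprK (W t)) (vanishingN _).
apply: (@barbalat _ V (fun t => - W t) _ (fun t => - dW t) (fun _ => 0)) => //.
- exact: derive_V.
- move=> t t0; apply: is_deriveN; apply: (is_derive_sum_fun (index_enum 'I_m)) => i.
  exact: is_derive_dot (hX i t0) (is_derive_mulmxl (Q i) (hX i t0)).
- apply: bounded1N; apply: bounded1_sum => i; apply: bounded1D.
    exact: bounded1_dot (bounded_dX i) (bounded1_mxM (bounded1_mx_cst _) (bounded_X i)).
  exact: bounded1_dot (bounded_X i) (bounded1_mxM (bounded1_mx_cst _) (bounded_dX i)).
- by move=> t _; rewrite addr0.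
- exact: nonincreasing_cauchy_oo V_nonincreasing hV.
- exact: vanishing0.
Qed.

Lemma vanishing_X i : vanishing_mx (X i).
Proof.
apply: (vanishing_mx_quad (hQ i) _ vanishing_W) => t _.
by rewrite /W (bigD1 i) //= lerDl sumr_ge0 // => j _; exact: sym_posdef_dot_ge0.
Qed.

Lemma vanishing_dX i : vanishing_mx (dX i).
Proof.
pose ddX t := A i *m dX i t + B i *m de i t.
have hdX (t : R) : 0 < t -> is_derive t 1 (dX i) (ddX t).
  by move=> t0; exact: is_derive_add (is_derive_mulmxl _ (hX i t0))
                                     (is_derive_mulmxl _ (derive_e i t0)).
have bddX : bounded1_mx ddX.
  exact: bounded1_mxD (bounded1_mxM (bounded1_mx_cst _) (bounded_dX i))
                      (bounded1_mxM (bounded1_mx_cst _) (bounded_de i)).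
have v0 : vanishing_mx (fun _ : R => 0 : 'cV[R]_(n.-1 * 3)).
  by move=> a j e0 e00; exists 0 => t _; rewrite mxE normr0 ltW.
exact: (barbalat_mx (hX i) hdX bddX (fun t _ => esym (addr0 _)) (vanishing_X i) v0).
Qed.

Lemma vanishing_e i : vanishing_mx (e i).
Proof.
have gi : gamma i n != 0 := @hurwitz_charpoly_last_neq0 R n (gamma i) (ltnW hn) (@hH1 i).
have vBe : vanishing_mx (fun t => B i *m e i t).
  apply: eq_vanishing_mx (vanishing_mxB (vanishing_dX i)
                           (vanishing_mxMl (bounded1_mx_cst (A i)) (vanishing_X i))) => t _.
  by rewrite /dX addrAC subrr add0r.
apply: eq_vanishing_mx (vanishing_mxMl (bounded1_mx_cst ((gamma i n ^+ 2)^-1 *: (B i)^T)) vBe).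
move=> t _; rewrite mulmxA -scalemxAl trBp_mulBp; last by lia.
by rewrite scalerA mulVf ?expf_neq0 // scale1r mul1mx.
Qed.

Lemma vanishing_skewS_et_bh i : vanishing_mx (fun t => skewS (et t) *m bh i t).
Proof.
pose dH t := skewS (det t) *m bh i t + skewS (et t) *m dbh i t.
pose U t := - (skewS (om t) *m e i t) - (B i)^T *m P i *m X i t.
have hH (t : R) : 0 < t -> is_derive t 1 (fun s => skewS (et s) *m bh i s) (dH t).
  by move=> t0; exact: is_derive_mulmx (is_derive_skewS (derive_et t0)) (hbh i t0).
have bdH : bounded1_mx dH.
  exact: bounded1_mxD (bounded1_mxM (bounded1_mx_skewS bounded_det) (bounded_bh i))
                      (bounded1_mxM (bounded1_mx_skewS bounded_et) (bounded_dbh i)).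
have deE t : 1 <= t -> de i t = skewS (et t) *m bh i t + U t.
  by move=> _; rewrite /de /U addrAC addrC.
have vU : vanishing_mx U.
  exact: vanishing_mxB (vanishing_mxN (vanishing_mxMl (bounded1_mx_skewS bounded_om)
                                                      (vanishing_e i)))
                       (vanishing_mxMl (bounded1_mx_cst _) (vanishing_X i)).
exact: barbalat_mx (derive_e i) hH bdH deE (vanishing_e i) vU.
Qed.

Lemma vanishing_et : vanishing_mx et.
Proof.
have [i [j bij]] := hnc; pose c t := skewS (b i t) *m b j t.
pose kappa := dot (r i) (r i) * dot (r j) (r j) - dot (r i) (r j) ^+ 2.
have cc t : 0 <= t -> dot (c t) (c t) = kappa by move=> t0; rewrite lagrange_identity !dot_b.
have kappa0 : 0 < kappa by rewrite -(cc 0) ?dot_self_gt0 ?bij.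
have Seb k : vanishing_mx (fun t => skewS (et t) *m b k t).
  apply: eq_vanishing_mx (vanishing_mxD (vanishing_skewS_et_bh k)
                           (vanishing_mxMl (bounded1_mx_skewS bounded_et) (vanishing_e k))).
  by move=> t _; rewrite -mulmxDr /e addrC subrK.
have bc : bounded1_mx c := bounded1_mxM (bounded1_mx_skewS (bounded_b i)) (bounded_b j).
apply: eq_vanishing_mx (vanishing_mxMl (bounded1_mx_cst (kappa^-1)%:M) (vanishing_mxD
  (vanishing_mxB (vanishing_mxZ (vanishing_dot (Seb j) bc) (bounded_b i))
                 (vanishing_mxZ (vanishing_dot (Seb i) bc) (bounded_b j)))
  (vanishing_mxZ (vanishing_dot (Seb i) (bounded_b j)) bc))) => t t1.
rewrite mul_scalar_mx -skewS_frame_decomposition cc ?(le_trans ler01 t1) //.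
by rewrite scalerA mulVf ?gt_eqF // scale1r.
Qed.

Lemma passive_filter_errors_cvg0 :
  (forall i, ((Rot t)^T *m r i - bh i t) @[t --> +oo] --> (0 : 'cV[R]_3))
  /\ (eta - etah t) @[t --> +oo] --> (0 : 'cV[R]_3).
Proof.
split; last exact: vanishing_mx_cvg vanishing_et.
by move=> i; exact: vanishing_mx_cvg (vanishing_e i).
Qed.

End PassiveFilter.

Unset Implicit Arguments.

Theorem proposition2 (R : realType) (n m : nat) (hn : (2 <= n)%N)
  (gamma : 'I_m -> nat -> R)
  (hH1 : forall i, hurwitz (charpoly_of n (gamma i)))
  (hH2 : forall i, hurwitz (charpoly_of n.-1 (gamma i)))
  (Q P : 'I_m -> 'M[R]_(n.-1 * 3))
  (hQ : forall i, sym_posdef (Q i)) (hP : forall i, sym_posdef (P i))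
  (hLyap : forall i, (Ap n (gamma i))^T *m P i + P i *m Ap n (gamma i) = - Q i)
  (Gam : 'M[R]_3) (hG : posdef_diag Gam)
  (r : 'I_m -> 'cV[R]_3) (Rot : R -> 'M[R]_3) (om : R -> 'cV[R]_3) (eta : 'cV[R]_3)
  (hSO : forall t : R, 0 <= t -> in_SO3 (Rot t))
  (hRot : forall t : R, 0 < t -> is_derive t (1 : R) Rot (Rot t *m skewS (om t)))
  (hom : exists M : R, forall t : R, 0 <= t -> `|om t| <= M)
  (hnc : exists i j : 'I_m, forall t : R, 0 <= t ->
           skewS ((Rot t)^T *m r i) *m ((Rot t)^T *m r j) != 0)
  (X : 'I_m -> R -> 'cV[R]_(n.-1 * 3))
  (bh : 'I_m -> R -> 'cV[R]_3) (etah : R -> 'cV[R]_3)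
  (hX : forall i (t : R), 0 < t ->
     is_derive t (1 : R) (X i)
       (Ap n (gamma i) *m X i t + Bp n (gamma i) *m ((Rot t)^T *m r i - bh i t)))
  (hbh : forall i (t : R), 0 < t ->
     is_derive t (1 : R) (bh i)
       (- (skewS (om t + eta - etah t) *m bh i t)
        + (Bp n (gamma i))^T *m P i *m X i t))
  (hetah : forall t : R, 0 < t ->
     is_derive t (1 : R) etah
       (- (Gam *m \sum_(i < m) skewS ((Rot t)^T *m r i) *m bh i t))) :
  (forall i, ((Rot t)^T *m r i - bh i t) @[t --> +oo] --> (0 : 'cV[R]_3))
  /\ (eta - etah t) @[t --> +oo] --> (0 : 'cV[R]_3).
Proof.
(* [hH2] only serves, in the paper, to guarantee that the [P i] exist. *)
exact: (passive_filter_errors_cvg0 (R := R) hn hH1 hQ hP hLyap hG hSO hRot hom hnc hX hbh hetah).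
Qed.
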